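(* Let $W_1,\dots,W_N$ be independent with $W_j\sim\mathrm{Bernoulli}(r_j)$. Let $\alpha_1,\dots,\alpha_N\ge0$ with $\sum_j\alpha_j=1$, and set $N_\alpha=1/\max_j\alpha_j$. Let $\hat r=\sum_j\alpha_jW_j$ and $r^*=\sum_j\alpha_jr_j$. Then for any $r$ with $0<r<r^*$, $$\Pr(\hat r<r)\le\exp\{-N_\alpha D(r\|r^* )\},$$ and for any $\tilde r$ with $r^*<\tilde r<1$, $$\Pr(\hat r>\tilde r)\le\exp\{-N_\alpha D(\tilde r\|r^* )\},$$ where $D(p\|q)=p\log\frac pq+(1-p)\log\frac{1-p}{1-q}$ is the relative entropy between Bernoulli$(p)$ and Bernoulli$(q)$. *)

From Stdlib Require Import Reals List.
Import ListNotations.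
Open Scope R_scope.

(* Sample space of N independent Bernoulli trials: all boolean lists of
   length N; position j (0-based) is the value of W_{j+1}. *)
Fixpoint outcomes (n : nat) : list (list bool) :=
  match n with
  | O => [nil]
  | S m => map (cons true) (outcomes m) ++ map (cons false) (outcomes m)
  end.

Definition sumR (l : list R) : R := fold_right Rplus 0 l.
Definition prodR (l : list R) : R := fold_right Rmult 1 l.

Definition bit (b : bool) : R := if b then 1 else 0.

Definition weight (N : nat) (r : nat -> R) (w : list bool) : R :=
  prodR (map (fun j => if nth j w false then r j else 1 - r j) (seq 0 N)).

Definition prob (N : nat) (r : nat -> R) (E : list bool -> bool) : R :=
  sumR (map (fun w => if E w then weight N r w else 0) (outcomes N)).

Definition rhat (N : nat) (alpha : nat -> R) (w : list bool) : R :=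
  sumR (map (fun j => alpha j * bit (nth j w false)) (seq 0 N)).

Definition rstar (N : nat) (alpha r : nat -> R) : R :=
  sumR (map (fun j => alpha j * r j) (seq 0 N)).

Definition maxR (N : nat) (alpha : nat -> R) : R :=
  fold_right Rmax 0 (map alpha (seq 0 N)).

Definition Nalpha (N : nat) (alpha : nat -> R) : R := 1 / maxR N alpha.

Definition KL (p q : R) : R :=
  p * ln (p / q) + (1 - p) * ln ((1 - p) / (1 - q)).

Definition ltb (x y : R) : bool := if Rlt_dec x y then true else false.

From Stdlib Require Import Reals List Lra Lia.
Open Scope R_scope.

(* Write m = max_j alpha_j, q = r^* and, for a real c, t = c / m.  The proof is
   the exponential-moment method:
   - Markov:        Pr(E) <= E[exp(t (rhat - z))] whenever t (rhat - z) >= 0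
                    on the event E;
   - independence:  E[exp(t rhat)] = prod_j (1 - r_j + r_j e^(t alpha_j)),
                    because the product law factorises over coordinates;
   - convexity:     since alpha_j / m <= 1, each factor is at most
                    (1 - r_j + r_j e^c)^(alpha_j / m), and concavity of ln
                    (Jensen with weights alpha_j) bounds the product by
                    (1 - q + q e^c)^(1/m).
   Choosing c = logit z - logit q turns the exponent -c z + ln(1 - q + q e^c)
   into -D(z||q); the sign of c matches the direction of the tail.  When q is
   0 or 1, the totalised D(z||q) is negative and the bound holds since
   probabilities are at most 1.  The file develops list-sum facts, the
   convexity inequalities, the Chernoff bound, and finally the theorem. *)

Lemma sumR_app (l1 l2 : list R) : sumR (l1 ++ l2) = sumR l1 + sumR l2.
Proof. induction l1 as [|a l1 IH]; simpl; [lra|rewrite IH; lra]. Qed.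

Lemma sumR_le (A : Type) (f g : A -> R) (l : list A) :
  (forall x, In x l -> f x <= g x) -> sumR (map f l) <= sumR (map g l).
Proof.
  induction l as [|a l IH]; simpl; intros H; [lra|].
  apply Rplus_le_compat; [apply H; auto|apply IH; intros; apply H; auto].
Qed.

Lemma sumR_ext (A : Type) (f g : A -> R) (l : list A) :
  (forall x, In x l -> f x = g x) -> sumR (map f l) = sumR (map g l).
Proof.
  induction l as [|a l IH]; simpl; intros H; [lra|].
  rewrite H by auto; rewrite IH; auto.
Qed.

Lemma sumR_add (A : Type) (f g : A -> R) (l : list A) :
  sumR (map (fun x => f x + g x) l) = sumR (map f l) + sumR (map g l).
Proof. induction l as [|a l IH]; simpl; [lra|rewrite IH; lra]. Qed.

Lemma sumR_scal (A : Type) (a : R) (f : A -> R) (l : list A) :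
  sumR (map (fun x => a * f x) l) = a * sumR (map f l).
Proof. induction l as [|b l IH]; simpl; [lra|rewrite IH; lra]. Qed.

Lemma sumR_zero (A : Type) (l : list A) : sumR (map (fun _ => 0) l) = 0.
Proof. induction l as [|a l IH]; simpl; [lra|rewrite IH; lra]. Qed.

Lemma prodR_ext (A : Type) (f g : A -> R) (l : list A) :
  (forall x, In x l -> f x = g x) -> prodR (map f l) = prodR (map g l).
Proof.
  induction l as [|a l IH]; simpl; intros H; [lra|].
  rewrite H by auto; rewrite IH; auto.
Qed.

Lemma prodR_mul (A : Type) (f g : A -> R) (l : list A) :
  prodR (map (fun x => f x * g x) l) = prodR (map f l) * prodR (map g l).
Proof. induction l as [|a l IH]; simpl; [lra|rewrite IH; lra]. Qed.

Lemma exp_sumR (A : Type) (f : A -> R) (l : list A) :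
  exp (sumR (map f l)) = prodR (map (fun x => exp (f x)) l).
Proof. induction l as [|a l IH]; simpl; [apply exp_0|rewrite exp_plus, IH; lra]. Qed.

Lemma prodR_nonneg (A : Type) (f : A -> R) (l : list A) :
  (forall x, In x l -> 0 <= f x) -> 0 <= prodR (map f l).
Proof.
  induction l as [|a l IH]; simpl; intros H; [lra|].
  apply Rmult_le_pos; [apply H|apply IH; intros; apply H]; auto.
Qed.

Lemma prodR_le_exp (A : Type) (f g : A -> R) (l : list A) :
  (forall x, In x l -> 0 <= f x <= exp (g x)) ->
  prodR (map f l) <= exp (sumR (map g l)).
Proof.
  induction l as [|a l IH]; simpl; intros H; [rewrite exp_0; lra|].
  rewrite exp_plus.
  assert (Ha := H a (or_introl eq_refl)).
  assert (Hl := prodR_nonneg A f l (fun x Hx => proj1 (H x (or_intror Hx)))).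
  apply Rmult_le_compat; try lra.
  apply IH; intros; apply H; auto.
Qed.

Lemma sum_outcomes (n : nat) (G : nat -> bool -> R) :
  sumR (map (fun w => prodR (map (fun j => G j (nth j w false)) (seq 0 n)))
            (outcomes n))
  = prodR (map (fun j => G j true + G j false) (seq 0 n)).
Proof.
  revert G; induction n as [|n IH]; intros G; simpl; [lra|].
  rewrite map_app, !map_map, sumR_app.
  assert (Hfirst : forall b,
    sumR (map (fun w => prodR (map (fun j => G j (nth j (b :: w) false))
                                   (seq 0 (S n)))) (outcomes n))
    = G 0%nat b * prodR (map (fun j => G (S j) true + G (S j) false) (seq 0 n))).
  { intros b. simpl. rewrite sumR_scal, <- (IH (fun j => G (S j))).
    f_equal. apply sumR_ext; intros w _. rewrite <- seq_shift, map_map.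
    reflexivity. }
  simpl in Hfirst |- *. rewrite (Hfirst true), (Hfirst false), <- seq_shift, map_map.
  lra.
Qed.

Lemma exp_mono x y : x <= y -> exp x <= exp y.
Proof. intros [H|H]; [left; apply exp_increasing; auto|subst; lra]. Qed.

Lemma ln_div a b : 0 < a -> 0 < b -> ln (a / b) = ln a - ln b.
Proof.
  intros; unfold Rdiv; rewrite ln_mult, ln_Rinv; try lra.
  apply Rinv_0_lt_compat; auto.
Qed.

Lemma exp_convex b d : 0 <= b <= 1 -> exp (b * d) <= b * exp d + 1 - b.
Proof.
  intros Hb.
  assert (T1 := exp_ineq1_le ((1 - b) * d)).
  assert (T2 := exp_ineq1_le (- (b * d))).
  assert (E1 : exp d = exp (b * d) * exp ((1 - b) * d))
    by (rewrite <- exp_plus; f_equal; ring).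
  assert (E2 : 1 = exp (b * d) * exp (- (b * d)))
    by (rewrite <- exp_plus, <- exp_0; f_equal; ring).
  assert (P := exp_pos (b * d)).
  assert (A1 : exp (b * d) * (1 + (1 - b) * d) <= exp d)
    by (rewrite E1; apply Rmult_le_compat_l; lra).
  assert (A2 : exp (b * d) * (1 + - (b * d)) <= 1)
    by (rewrite E2 at 2; apply Rmult_le_compat_l; lra).
  nra.
Qed.

Lemma ln_tangent S Y : 0 < S -> 0 < Y -> ln S <= ln Y + (S - Y) / Y.
Proof.
  intros HS HY.
  assert (H := exp_ineq1_le (ln (S / Y))).
  rewrite exp_ln, ln_div in H by (try apply Rdiv_lt_0_compat; auto).
  assert (S / Y - 1 = (S - Y) / Y) by (field; lra). lra.
Qed.

Lemma jensen_ln (l : list nat) (a S : nat -> R) :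
  (forall j, In j l -> 0 <= a j /\ 0 < S j) ->
  sumR (map a l) = 1 ->
  0 < sumR (map (fun j => a j * S j) l) ->
  sumR (map (fun j => a j * ln (S j)) l) <= ln (sumR (map (fun j => a j * S j) l)).
Proof.
  intros Hl Ha HY. set (Y := sumR (map (fun j => a j * S j) l)) in *.
  apply Rle_trans with
    (sumR (map (fun j => ln Y * a j + (/ Y * (a j * S j) + (-1) * a j)) l)).
  - apply sumR_le. intros j Hj. destruct (Hl j Hj) as [Haj HSj].
    apply Rle_trans with (a j * (ln Y + (S j - Y) / Y)).
    + apply Rmult_le_compat_l; auto. apply ln_tangent; auto.
    + right. field. lra.
  - rewrite !sumR_add, !sumR_scal, Ha. fold Y. right. field. lra.
Qed.

(* The moment generating function of Bernoulli(r) at b c, for b in [0,1],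
   is at most the b-th power of its value at c (concavity of x |-> x^b). *)
Lemma bernoulli_mgf_power r b c : 0 <= r <= 1 -> 0 <= b <= 1 ->
  1 - r + r * exp (b * c) <= exp (b * ln (1 - r + r * exp c)).
Proof.
  intros Hr Hb.
  set (S := 1 - r + r * exp c).
  assert (HS : 0 < S) by (unfold S; assert (0 < exp c) by apply exp_pos; nra).
  assert (C1 := exp_convex b (- ln S) Hb).
  assert (C2 := exp_convex b (c - ln S) Hb).
  rewrite exp_Ropp, exp_ln in C1 by auto.
  assert (E : exp (c - ln S) = exp c / S)
    by (unfold Rminus; rewrite exp_plus, exp_Ropp, exp_ln by auto; reflexivity).
  rewrite E in C2.
  set (T := exp (b * ln S)).
  assert (HT : 0 < T) by apply exp_pos.
  assert (F1 : exp (b * - ln S) * T = 1)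
    by (unfold T; rewrite <- exp_plus, <- exp_0; f_equal; ring).
  assert (F2 : exp (b * (c - ln S)) * T = exp (b * c))
    by (unfold T; rewrite <- exp_plus; f_equal; ring).
  assert (K : (1 - r) * exp (b * - ln S) + r * exp (b * (c - ln S)) <= 1).
  { apply Rle_trans with ((1 - r) * (b * / S + 1 - b) + r * (b * (exp c / S) + 1 - b)).
    - apply Rplus_le_compat; apply Rmult_le_compat_l; lra.
    - right. unfold S. field. fold S. lra. }
  assert (K2 := Rmult_le_compat_r T _ _ (Rlt_le _ _ HT) K).
  rewrite Rmult_plus_distr_r, !Rmult_assoc, F1, F2 in K2. lra.
Qed.

Lemma maxR_ge N alpha j : (j < N)%nat -> alpha j <= maxR N alpha.
Proof.
  intros Hj. unfold maxR.
  assert (Hin : In (alpha j) (map alpha (seq 0 N)))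
    by (apply in_map, in_seq; lia).
  induction (map alpha (seq 0 N)) as [|x l IH]; simpl in *; [tauto|].
  destruct Hin as [->|Hin]; [apply Rmax_l|].
  eapply Rle_trans; [apply IH; auto|apply Rmax_r].
Qed.

Lemma maxR_pos N alpha : (forall j, (j < N)%nat -> 0 <= alpha j) ->
  sumR (map alpha (seq 0 N)) = 1 -> 0 < maxR N alpha.
Proof.
  intros Ha Hs. destruct (Rle_lt_dec (maxR N alpha) 0) as [H|H]; [|auto].
  assert (Hle : sumR (map alpha (seq 0 N)) <= sumR (map (fun _ => 0) (seq 0 N))).
  { apply sumR_le. intros j Hj. apply in_seq in Hj.
    assert (alpha j <= maxR N alpha) by (apply maxR_ge; lia). lra. }
  rewrite sumR_zero in Hle. lra.
Qed.

Definition logit (p : R) : R := ln (p / (1 - p)).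

Lemma ln_le x y : 0 < x -> x <= y -> ln x <= ln y.
Proof. intros Hx [H|H]; [left; apply ln_increasing|subst]; lra. Qed.

Lemma logit_le p p' : 0 < p -> p <= p' -> p' < 1 -> logit p <= logit p'.
Proof.
  intros Hp Hpp' Hp'. unfold logit. apply ln_le; [apply Rdiv_lt_0_compat; lra|].
  apply Rmult_le_reg_r with ((1 - p) * (1 - p')); [nra|].
  unfold Rdiv. replace (p * / (1 - p) * ((1 - p) * (1 - p'))) with (p * (1 - p'))
    by (field; lra).
  replace (p' * / (1 - p') * ((1 - p) * (1 - p'))) with (p' * (1 - p))
    by (field; lra).
  nra.
Qed.

Lemma chernoff_exponent_at_logit z q : 0 < z < 1 -> 0 < q < 1 ->
  let c := logit z - logit q in
  - c * z + ln (1 - q + q * exp c) = - KL z q.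
Proof.
  intros Hz Hq c.
  assert (Ec : exp c = (z / (1 - z)) / (q / (1 - q))).
  { unfold c, logit, Rminus at 1.
    rewrite exp_plus, exp_Ropp, !exp_ln by (apply Rdiv_lt_0_compat; lra).
    reflexivity. }
  replace (1 - q + q * exp c) with ((1 - q) / (1 - z)) by (rewrite Ec; field; lra).
  unfold c, logit, KL. rewrite !ln_div by lra. ring.
Qed.

(* Stdlib's ln is total with ln 0 = 0; together with / 0 = 0 this makes the
   relative entropy against a degenerate Bernoulli law finite and negative
   (instead of +oo), so the theorem is then implied by Pr(E) <= 1. *)
Lemma ln_0 : ln 0 = 0.
Proof.
  unfold ln; destruct (Rlt_dec 0 0) as [h|h]; [exfalso; exact (Rlt_irrefl _ h)|reflexivity].
Qed.

Lemma ln_lt_0 x : 0 < x < 1 -> ln x < 0.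
Proof. intros; rewrite <- ln_1; apply ln_increasing; lra. Qed.

Lemma KL_at_1 x : 0 < x < 1 -> KL x 1 < 0.
Proof.
  intros Hx. unfold KL. replace (1 - 1) with 0 by ring.
  unfold Rdiv. rewrite Rinv_0, Rmult_0_r, ln_0, Rinv_1, Rmult_1_r.
  assert (ln x < 0) by (apply ln_lt_0; lra). nra.
Qed.

Lemma KL_at_0 y : 0 < y < 1 -> KL y 0 < 0.
Proof.
  intros Hy. unfold KL. rewrite Rminus_0_r.
  unfold Rdiv. rewrite Rinv_0, Rmult_0_r, ln_0, Rinv_1, Rmult_1_r.
  assert (ln (1 - y) < 0) by (apply ln_lt_0; lra). nra.
Qed.

Lemma ltb_true a b : ltb a b = true -> a < b.
Proof. unfold ltb; destruct (Rlt_dec a b); congruence. Qed.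

Section Chernoff.
Variables (N : nat) (r alpha : nat -> R).
Hypothesis hr : forall j, (j < N)%nat -> 0 <= r j <= 1.
Hypothesis halpha : forall j, (j < N)%nat -> 0 <= alpha j.
Hypothesis hsum : sumR (map alpha (seq 0 N)) = 1.

Lemma rstar_bounds : 0 <= rstar N alpha r <= 1.
Proof.
  unfold rstar. split.
  - rewrite <- (sumR_zero _ (seq 0 N)). apply sumR_le. intros j Hj.
    apply in_seq in Hj.
    assert (0 <= r j <= 1) by (apply hr; lia).
    assert (0 <= alpha j) by (apply halpha; lia). nra.
  - rewrite <- hsum. apply sumR_le. intros j Hj. apply in_seq in Hj.
    assert (0 <= r j <= 1) by (apply hr; lia).
    assert (0 <= alpha j) by (apply halpha; lia). nra.
Qed.

Lemma weight_nonneg w : 0 <= weight N r w.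
Proof.
  apply prodR_nonneg. intros j Hj. apply in_seq in Hj.
  assert (0 <= r j <= 1) by (apply hr; lia).
  destruct (nth j w false); lra.
Qed.

Lemma prob_le_1 E : prob N r E <= 1.
Proof.
  apply Rle_trans with (sumR (map (weight N r) (outcomes N))).
  { apply sumR_le. intros w _. assert (W := weight_nonneg w).
    destruct (E w); lra. }
  unfold weight.
  rewrite (sum_outcomes N (fun j (b : bool) => if b then r j else 1 - r j)).
  eapply Rle_trans; [apply prodR_le_exp with (g := fun _ => 0)|].
  - intros j Hj. apply in_seq in Hj. assert (0 <= r j <= 1) by (apply hr; lia).
    rewrite exp_0. lra.
  - rewrite sumR_zero, exp_0. lra.
Qed.

Lemma prob_le_exp_moment t z E :
  (forall w, E w = true -> 0 <= t * (rhat N alpha w - z)) ->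
  prob N r E <=
  sumR (map (fun w => weight N r w * exp (t * (rhat N alpha w - z))) (outcomes N)).
Proof.
  intros HE. apply sumR_le. intros w _.
  assert (W := weight_nonneg w).
  destruct (E w) eqn:Ew.
  - assert (X := exp_ineq1_le (t * (rhat N alpha w - z))).
    specialize (HE w Ew). nra.
  - apply Rmult_le_pos; [auto|left; apply exp_pos].
Qed.

Lemma exp_moment_factor t z :
  sumR (map (fun w => weight N r w * exp (t * (rhat N alpha w - z))) (outcomes N))
  = exp (- (t * z)) *
    prodR (map (fun j => 1 - r j + r j * exp (t * alpha j)) (seq 0 N)).
Proof.
  set (G := fun j (b : bool) =>
        (if b then r j else 1 - r j) * exp (t * (alpha j * bit b))).
  rewrite (sumR_ext _ _ (fun w =>
     exp (- (t * z)) * prodR (map (fun j => G j (nth j w false)) (seq 0 N)))).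
  - rewrite sumR_scal, sum_outcomes. f_equal.
    apply prodR_ext. intros j _. unfold G, bit.
    rewrite !Rmult_0_r, Rmult_1_r, exp_0. ring.
  - intros w _. unfold G, weight, rhat.
    rewrite prodR_mul, <- exp_sumR, sumR_scal, <- Rmult_assoc,
      (Rmult_comm (exp _)), Rmult_assoc, <- exp_plus.
    do 2 f_equal. ring.
Qed.

Lemma mean_mgf c :
  sumR (map (fun j => alpha j * (1 - r j + r j * exp c)) (seq 0 N))
  = 1 - rstar N alpha r + rstar N alpha r * exp c.
Proof.
  rewrite (sumR_ext _ _
    (fun j => alpha j + ((-1) * (alpha j * r j) + exp c * (alpha j * r j))))
    by (intros; ring).
  rewrite !sumR_add, !sumR_scal, hsum. unfold rstar. ring.
Qed.

Lemma mgf_bound c :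
  let m := maxR N alpha in let q := rstar N alpha r in
  prodR (map (fun j => 1 - r j + r j * exp (c / m * alpha j)) (seq 0 N))
  <= exp (1 / m * ln (1 - q + q * exp c)).
Proof.
  intros m q.
  assert (Hm : 0 < m) by (apply maxR_pos; auto).
  assert (Hq := rstar_bounds). fold q in Hq.
  assert (Hc := exp_pos c).
  assert (Hfactor : forall j, In j (seq 0 N) ->
    0 < 1 - r j + r j * exp c /\
    0 <= 1 - r j + r j * exp (c / m * alpha j)
      <= exp (alpha j / m * ln (1 - r j + r j * exp c))).
  { intros j Hj. apply in_seq in Hj.
    assert (0 <= r j <= 1) by (apply hr; lia).
    assert (Hb : 0 <= alpha j / m <= 1).
    { assert (0 <= alpha j) by (apply halpha; lia).
      assert (alpha j <= m) by (apply maxR_ge; lia).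
      split; [unfold Rdiv; apply Rmult_le_pos; [lra|left; apply Rinv_0_lt_compat; lra]|].
      apply Rmult_le_reg_r with m; auto. unfold Rdiv.
      rewrite Rmult_assoc, Rinv_l; lra. }
    replace (c / m * alpha j) with (alpha j / m * c) by (field; lra).
    assert (P := exp_pos (alpha j / m * c)).
    assert (B := bernoulli_mgf_power (r j) (alpha j / m) c ltac:(auto) Hb).
    repeat split; nra. }
  eapply Rle_trans; [apply prodR_le_exp; intros j Hj; apply Hfactor, Hj|].
  apply exp_mono.
  rewrite (sumR_ext _ _ (fun j => / m * (alpha j * ln (1 - r j + r j * exp c))))
    by (intros; unfold Rdiv; ring).
  rewrite sumR_scal. unfold Rdiv. rewrite Rmult_1_l.
  apply Rmult_le_compat_l; [left; apply Rinv_0_lt_compat; auto|].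
  unfold q; rewrite <- (mean_mgf c). apply jensen_ln; auto.
  - intros j Hj. split; [apply halpha; apply in_seq in Hj; lia|].
    apply Hfactor, Hj.
  - rewrite mean_mgf. fold q. nra.
Qed.

Lemma chernoff c z E :
  let m := maxR N alpha in let q := rstar N alpha r in
  (forall w, E w = true -> 0 <= c * (rhat N alpha w - z)) ->
  prob N r E <= exp (1 / m * (- c * z + ln (1 - q + q * exp c))).
Proof.
  intros m q HE.
  assert (Hm : 0 < m) by (apply maxR_pos; auto).
  eapply Rle_trans; [apply (prob_le_exp_moment (c / m) z)|].
  { intros w Hw. unfold Rdiv.
    replace (c * / m * (rhat N alpha w - z))
      with (/ m * (c * (rhat N alpha w - z))) by ring.
    apply Rmult_le_pos; [left; apply Rinv_0_lt_compat|apply HE]; auto. }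
  rewrite exp_moment_factor.
  replace (1 / m * (- c * z + ln (1 - q + q * exp c)))
    with (- (c / m * z) + 1 / m * ln (1 - q + q * exp c)) by (field; lra).
  rewrite exp_plus.
  apply Rmult_le_compat_l; [left; apply exp_pos|apply mgf_bound].
Qed.


Lemma chernoff_KL z E :
  0 < z < 1 -> 0 < rstar N alpha r < 1 ->
  (forall w, E w = true ->
     0 <= (logit z - logit (rstar N alpha r)) * (rhat N alpha w - z)) ->
  prob N r E <= exp (- (Nalpha N alpha * KL z (rstar N alpha r))).
Proof.
  set (q := rstar N alpha r). intros Hz Hq HE.
  eapply Rle_trans; [apply (chernoff (logit z - logit q) z E HE)|].
  fold q. rewrite (chernoff_exponent_at_logit z q Hz Hq).
  unfold Nalpha. right. f_equal. ring.
Qed.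

Lemma bound_of_KL_nonpos z q E :
  KL z q <= 0 -> prob N r E <= exp (- (Nalpha N alpha * KL z q)).
Proof.
  intros HKL.
  assert (Hm : 0 < Nalpha N alpha)
    by (apply Rdiv_lt_0_compat; [lra|apply maxR_pos; auto]).
  apply Rle_trans with 1; [apply prob_le_1|].
  assert (X := exp_ineq1_le (- (Nalpha N alpha * KL z q))). nra.
Qed.

End Chernoff.

Theorem mainTheorem8 (N : nat) (r alpha : nat -> R)
  (hr : forall j, (j < N)%nat -> 0 <= r j <= 1)
  (halpha : forall j, (j < N)%nat -> 0 <= alpha j)
  (hsum : sumR (map alpha (seq 0 N)) = 1) :
  (forall x, 0 < x -> x < rstar N alpha r ->
     prob N r (fun w => ltb (rhat N alpha w) x)
       <= exp (- (Nalpha N alpha * KL x (rstar N alpha r)))) /\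
  (forall y, rstar N alpha r < y -> y < 1 ->
     prob N r (fun w => ltb y (rhat N alpha w))
       <= exp (- (Nalpha N alpha * KL y (rstar N alpha r)))).
Proof.
  assert (Hq := rstar_bounds N r alpha hr halpha hsum).
  set (q := rstar N alpha r) in *.
  split.
  - intros x Hx Hxq.
    destruct (Rlt_le_dec q 1) as [Hq1|Hq1].
    + apply (chernoff_KL N r alpha hr halpha hsum); fold q; [lra|lra|].
      intros w Hw. apply ltb_true in Hw.
      assert (logit x <= logit q) by (apply logit_le; lra). nra.
    + apply (bound_of_KL_nonpos N r alpha hr halpha hsum).
      replace q with 1 by lra. left. apply KL_at_1. lra.
  - intros y Hqy Hy.
    destruct (Rlt_le_dec 0 q) as [Hq0|Hq0].
    + apply (chernoff_KL N r alpha hr halpha hsum); fold q; [lra|lra|].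
      intros w Hw. apply ltb_true in Hw.
      assert (logit q <= logit y) by (apply logit_le; lra). nra.
    + apply (bound_of_KL_nonpos N r alpha hr halpha hsum).
      replace q with 0 by lra. left. apply KL_at_0. lra.
Qed.
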